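(* Let $G=(V\cup\{s,t\},E)$ be a directed or undirected graph with distinguished vertices $s,t$, such that the path coalitional games defined below are simple games. Then the core of (i) the Edge Path Coalitional Game (EPCG) of $G$ is non-empty if and only if there exists an edge whose removal disconnects $s$ and $t$; (ii) the Vertex Path Coalitional Game (VPCG) of $G$ is non-empty if and only if there exists a vertex whose removal disconnects $s$ and $t$; (iii) the dual $EPCG^D$ of the EPCG of $G$ is non-empty if and only if there exists an $(s,t)$ edge; (iv) the dual $VPCG^D$ of the VPCG of $G$ is non-empty if and only if there exists a vertex $x$ such that $(s,x)$ and $(x,t)$ are edges of $G$.
   Context: A coalitional game is a pair $(N,v)$ with $N$ a finite player set and $v:2^N\to\mathbb{R}_+$, $v(\varnothing)=0$. A simple game is a monotone coalitional game with $v:2^N\to\{0,1\}$, $v(\varnothing)=0$, $v(N)=1$. The EPCG of $G$ has $N=E$ and $v(S)=1$ iff the edges in $S$ contain an $s$-$t$ path, else $0$. The VPCG of $G$ has $N=V$ (the vertices other than $s,t$) and $v(S)=1$ iff the graph induced on $S\cup\{s,t\}$ contains an $s$-$t$ path, else $0$. The dual of $(N,v)$ is $(N,v^D)$ with $v^D(S)=v(N)-v(N\setminus S)$. For a payoff vector $x\in\mathbb{R}^N$ write $x(S)=\sum_{i\in S}x_i$ and $e(x,S)=x(S)-v(S)$. The core is the set of payoff vectors $x$ with $x(N)=v(N)$ and $e(x,S)\ge 0$ for all $S\subseteq N$. *)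

From HB Require Import structures.
From mathcomp Require Import all_boot all_order all_algebra.
Set Implicit Arguments. Unset Strict Implicit. Unset Printing Implicit Defensive.
Import Order.TTheory GRing.Theory Num.Theory.
Local Open Scope ring_scope.

Section Games.
Variables (R : realFieldType) (N : finType).

Definition game := {set N} -> R.

Definition is_coalitional_game (v : game) : Prop :=
  v set0 = 0 /\ forall S, 0 <= v S.

Definition simple_game (v : game) : Prop :=
  [/\ forall S, v S = 0 \/ v S = 1,
      v set0 = 0,
      v setT = 1 &
      forall S T : {set N}, S \subset T -> v S <= v T].

Definition dual_game (v : game) : game := fun S => v setT - v (~: S).

Definition payoff_sum (x : N -> R) (S : {set N}) : R := \sum_(i in S) x i.

Definition excess (v : game) (x : N -> R) (S : {set N}) : R :=
  payoff_sum x S - v S.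

Definition in_core (v : game) (x : N -> R) : Prop :=
  payoff_sum x setT = v setT /\ forall S : {set N}, 0 <= excess v x S.

Definition core_nonempty (v : game) : Prop := exists x : N -> R, in_core v x.
End Games.

(* A (multi)graph on the finite vertex type W with finite edge type E; edge e
   joins src e to dst e.  If [directed] is true, e may only be traversed from
   src e to dst e; otherwise in both directions. *)
Section Graphs.
Variables (W E : finType) (directed : bool) (src dst : E -> W).

Definition step (A : {set E}) : rel W :=
  fun u w => [exists e in A, ((src e == u) && (dst e == w))
                         || (~~ directed && (src e == w) && (dst e == u))].

Definition has_path (A : {set E}) (u w : W) : bool := connect (step A) u w.

Definition induced_edges (U : {set W}) : {set E} :=
  [set e | (src e \in U) && (dst e \in U)].

Definition is_edge (u w : W) : bool := step setT u w.

Variables (s t : W).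

Definition inner_vertex := {x : W | (x != s) && (x != t)}.

Variable R : realFieldType.

Definition EPCG : game R E := fun S => if has_path S s t then 1 else 0.

Definition VPCG : game R inner_vertex :=
  fun S => if has_path (induced_edges (s |: (t |: [set val x | x in S]))) s t
           then 1 else 0.
End Graphs.
Arguments VPCG {W E} directed src dst s t R _.

From HB Require Import structures.
From mathcomp Require Import all_boot all_order all_algebra.
From mathcomp Require Import lra.
Import Order.TTheory GRing.Theory Num.Theory.
Local Open Scope ring_scope.

(* A simple game has a non-empty core iff it has a veto player, one without
   whom the grand coalition loses.  The indicator payoff of a veto player is in
   the core; conversely a core payoff is nonnegative on singletons, and is
   nonpositive on a non-veto player i because ~{i} already wins and must be paid
   the whole unit, so it cannot sum to 1 unless some player has veto.  In the
   EPCG and VPCG a veto player is an edge or vertex separating s from t; in the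
   dual games it is a player that wins alone, i.e. an s-t edge, or a vertex
   adjacent to both s and t (as a coalition {x} in the VPCG may use s and t). *)

Section SimpleGames.
Context {R : realFieldType} {N : finType}.
Implicit Types (v : game R N) (x : N -> R) (S : {set N}) (i : N).

Definition veto_player v i : Prop := v (~: [set i]) = 0.

Lemma payoff_sumT_split x i :
  payoff_sum x setT = x i + payoff_sum x (~: [set i]).
Proof. by rewrite /payoff_sum (big_setD1 i) ?inE // setTD. Qed.

Lemma payoff_sum_indicator i S :
  payoff_sum (fun j => (j == i)%:R) S = (i \in S)%:R :> R.
Proof.
rewrite /payoff_sum; case: (boolP (i \in S)) => iS.
  rewrite (big_setD1 i iS) /= eqxx big1 ?addr0 // => j.
  by rewrite !inE => /andP[/negbTE -> _].
by rewrite big1 // => j; case: eqP iS => // -> /negbTE ->.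
Qed.

Lemma simple_game_ge0 v S : simple_game v -> 0 <= v S.
Proof. by case=> v01 _ _ _; case: (v01 S) => ->. Qed.

Lemma core_simple_nonveto_payoff0 v x i :
  simple_game v -> in_core v x -> v (~: [set i]) = 1 -> x i = 0.
Proof.
move=> sv [xT x_ge] vi1.
have xi_ge0 : 0 <= x i.
  have := x_ge [set i]; rewrite /excess /payoff_sum big_set1.
  by have := @simple_game_ge0 v [set i] sv; lra.
have := x_ge (~: [set i]); rewrite /excess vi1.
case: sv xT => _ _ -> _; rewrite (payoff_sumT_split _ i); lra.
Qed.

Lemma simple_core_nonemptyP v :
  simple_game v -> core_nonempty v <-> exists i, veto_player v i.
Proof.
move=> sv; have [v01 _ vT vmon] := sv; split.
- case=> x xcore.
  have [/existsP[i /eqP vi] | /existsPn noveto] := boolP [exists i, v (~: [set i]) == 0].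
    by exists i.
  have x0 i : x i = 0.
    apply: core_simple_nonveto_payoff0 sv xcore _.
    by case: (v01 (~: [set i])) => // vi0; move: (noveto i); rewrite vi0 eqxx.
  have [+ _] := xcore; rewrite vT /payoff_sum big1 // => /eqP.
  by rewrite eq_sym oner_eq0.
- case=> i vi; exists (fun j => (j == i)%:R); split=> [|S].
    by rewrite payoff_sum_indicator inE vT.
  rewrite /excess payoff_sum_indicator; case: (boolP (i \in S)) => iS.
    by rewrite subr_ge0 -vT vmon ?subsetT.
  by rewrite mulr0n sub0r oppr_ge0 -vi vmon // subsetC sub1set inE.
Qed.

Lemma dual_simple_game v : simple_game v -> simple_game (dual_game v).
Proof.
case=> v01 v0 vT vmon; split; rewrite /dual_game.
- by move=> S; rewrite vT; case: (v01 (~: S)) => ->; [right; rewrite subr0 | left; rewrite subrr].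
- by rewrite setC0 vT subrr.
- by rewrite setCT v0 subr0.
- by move=> S T ST; rewrite lerB // vmon // setCS.
Qed.

Lemma dual_veto_player v i :
  simple_game v -> veto_player (dual_game v) i <-> v [set i] = 1.
Proof.
case=> _ _ vT _; rewrite /veto_player /dual_game setCK vT.
by split=> [/eqP|<-]; [rewrite subr_eq0 => /eqP | rewrite subrr].
Qed.

End SimpleGames.

Lemma connect_invariant {T : finType} {r : rel T} (P : T -> Prop) {x y} :
  (forall u w, P u -> r u w -> P w) -> P x -> connect r x y -> P y.
Proof.
move=> stepP Px /connectP[p rp ->].
by elim: p x Px rp => [|z p IHp] x Px //= /andP[/(stepP _ _ Px) Pz /(IHp _ Pz)].
Qed.

Section Paths.
Context {W E : finType} {directed : bool} {src dst : E -> W}.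
Local Notation step := (step directed src dst).
Local Notation has_path := (has_path directed src dst).
Local Notation is_edge := (is_edge directed src dst).
Local Notation induced_edges := (induced_edges src dst).
Implicit Types (A B : {set E}) (U : {set W}) (e : E) (u w x : W).

Lemma step_subset A B u w : A \subset B -> step A u w -> step B u w.
Proof.
move=> AB /existsP[e /andP[eA joins]]; apply/existsP; exists e.
by rewrite (subsetP AB).
Qed.

Lemma step_is_edge {A u w} : step A u w -> is_edge u w.
Proof. exact/step_subset/subsetT. Qed.

Lemma is_edgeP u w : reflect (exists e, step [set e] u w) (is_edge u w).
Proof.
apply: (iffP idP) => [/existsP[e /andP[_ joins]] | [e /step_is_edge //]].
by exists e; apply/existsP; exists e; rewrite inE eqxx.
Qed.

Lemma step_set1 e u w : step [set e] u w =
  ((src e == u) && (dst e == w)) || (~~ directed && (src e == w) && (dst e == u)).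
Proof.
apply/existsP/idP => [[e' /andP[/set1P -> //]] | joins].
by exists e; rewrite inE eqxx.
Qed.

Lemma step_set1_back e u x w : step [set e] u x -> step [set e] x w -> w = u.
Proof.
rewrite !step_set1.
by do 2 case/orP => /andP[+ /eqP ?] => [/eqP ?|/andP[_ /eqP ?]]; subst.
Qed.

Lemma connect_step_set1 e u w :
  connect (step [set e]) u w -> w = u \/ step [set e] u w.
Proof.
apply: (connect_invariant (fun y => y = u \/ step [set e] u y)); last by left.
by move=> x y [-> | ux] xy; [right | left; apply: step_set1_back ux xy].
Qed.

Lemma has_path_set1 e u w : u != w -> has_path [set e] u w = step [set e] u w.
Proof.
move=> uw; apply/idP/idP => [/connect_step_set1[wu | //] | /connect1 //].
by rewrite wu eqxx in uw.
Qed.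

Lemma step_induced_mem {U u w} :
  step (induced_edges U) u w -> (u \in U) && (w \in U).
Proof.
case/existsP => e /andP[]; rewrite inE => /andP[sU dU].
by case/orP => [/andP[/eqP<- /eqP<-] | /andP[/andP[_ /eqP<-] /eqP<-]]; rewrite ?sU ?dU.
Qed.

Lemma step_induced U u w :
  u \in U -> w \in U -> is_edge u w -> step (induced_edges U) u w.
Proof.
move=> uU wU /existsP[e /andP[_ joins]]; apply/existsP; exists e.
rewrite joins andbT inE.
by case/orP: joins => [/andP[/eqP-> /eqP->] | /andP[/andP[_ /eqP->] /eqP->]]; rewrite ?uU ?wU.
Qed.

Lemma has_path_induced_via u w x :
  ~~ has_path (induced_edges [set u; w]) u w ->
  has_path (induced_edges (u |: [set w; x])) u w = is_edge u x && is_edge x w.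
Proof.
move=> no_path_uw; have uw_neq : u != w.
  by apply: contraNneq no_path_uw => ->; apply: connect0.
have no_edge_uw : ~~ is_edge u w.
  by apply: contra no_path_uw => /(step_induced _ _)/connect1; apply; rewrite !inE eqxx ?orbT.
apply/idP/idP => [path_uw | /andP[ux xw]]; last first.
  by apply: (connect_trans (y := x)); apply/connect1/step_induced; rewrite ?inE ?eqxx ?orbT.
(* [P] over-approximates the vertices reachable from [u] inside {u, w, x}. *)
pose P y := y = u \/ is_edge u x /\ (y = x \/ is_edge x w).
have : P w.
  apply: (connect_invariant P _ _ path_uw); last by left.
  rewrite /P => y z Py yz; have /andP[_] := step_induced_mem yz.
  move/step_is_edge: yz => yz; rewrite !inE => /or3P[/eqP-> | /eqP zw | /eqP zx].
  - by left.
  - rewrite zw in yz *; case: Py => [yu | [ux yx_or_xw]].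
      by move: no_edge_uw; rewrite -yu yz.
    by right; split=> //; right; case: yx_or_xw => [<- |].
  - by rewrite zx in yz *; case: Py => [<- | [ux _]]; right; split=> //; left.
case=> [wu | [ux [wx | xw]]]; last by rewrite ux xw.
- by rewrite wu eqxx in uw_neq.
- by rewrite wx ux in no_edge_uw.
Qed.

End Paths.

Section PathGames.
Context {W E : finType} {directed : bool} {src dst : E -> W} {s t : W}
  {R : realFieldType}.
Local Notation has_path := (has_path directed src dst).
Local Notation is_edge := (is_edge directed src dst).
Local Notation induced_edges := (induced_edges src dst).
Local Notation EPCG := (EPCG directed src dst s t R).
Local Notation VPCG := (VPCG directed src dst s t R).

Lemma indicator_eq0 (b : bool) : (if b then 1 else 0 : R) = 0 <-> ~~ b.
Proof. by case: b; split=> // /eqP; rewrite oner_eq0. Qed.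

Lemma indicator_eq1 (b : bool) : (if b then 1 else 0 : R) = 1 <-> b.
Proof. by case: b; split=> // /eqP; rewrite eq_sym oner_eq0. Qed.

Lemma EPCG_veto_player e :
  veto_player EPCG e <-> ~~ has_path (~: [set e]) s t.
Proof. exact: indicator_eq0. Qed.

Lemma EPCG_dual_veto_exists :
  simple_game EPCG -> (exists e, veto_player (dual_game EPCG) e) <-> is_edge s t.
Proof.
move=> sv; have [_ /indicator_eq0 no_path_st _ _] := sv.
have st : s != t by apply: contraNneq no_path_st => ->; apply: connect0.
split=> [[e] | /is_edgeP[e se]].
  by move/(dual_veto_player _ _ sv)/indicator_eq1; rewrite has_path_set1 // => /step_is_edge.
by exists e; apply/(dual_veto_player _ _ sv)/indicator_eq1; rewrite has_path_set1.
Qed.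

Lemma VPCG_coalition_complement (x : inner_vertex s t) :
  s |: (t |: [set val y | y in ~: [set x]]) = ~: [set val x].
Proof.
apply/setP => w; rewrite !inE; have /andP[xs xt] := valP x.
have [-> | ws] /= := eqVneq w s; first by rewrite eq_sym.
have [-> | wt] /= := eqVneq w t; first by rewrite eq_sym.
apply/imsetP/idP => [[y] | wx].
  by rewrite !inE => yx ->; apply: contra yx => /eqP/val_inj ->.
have wP : (w != s) && (w != t) by rewrite ws wt.
by exists (exist _ w wP) => //; rewrite !inE; apply: contra wx => /eqP <-.
Qed.

Lemma VPCG_veto_player x :
  veto_player VPCG x <-> ~~ has_path (induced_edges (~: [set val x])) s t.
Proof. by rewrite /veto_player /VPCG VPCG_coalition_complement; apply: indicator_eq0. Qed.

Lemma VPCG_dual_veto_player x : simple_game VPCG ->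
  veto_player (dual_game VPCG) x <-> is_edge s (val x) && is_edge (val x) t.
Proof.
move=> sv; have [_ v0 _ _] := sv; rewrite dual_veto_player //.
move: v0; rewrite /VPCG imset0 setU0 imset_set1 => /indicator_eq0 no_path_st.
by rewrite -has_path_induced_via //; apply: indicator_eq1.
Qed.

End PathGames.

Theorem proposition1 (R : realFieldType) (W E : finType) (directed : bool)
    (src dst : E -> W) (s t : W) :
  (* (i) *)
  (simple_game (EPCG directed src dst s t R) ->
    (core_nonempty (EPCG directed src dst s t R) <->
     exists e : E, ~~ has_path directed src dst (~: [set e]) s t)) /\
  (* (ii) *)
  (simple_game (VPCG directed src dst s t R) ->
    (core_nonempty (VPCG directed src dst s t R) <->
     exists x : inner_vertex s t,
       ~~ has_path directed src dst (induced_edges src dst (~: [set val x])) s t)) /\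
  (* (iii) *)
  (simple_game (EPCG directed src dst s t R) ->
    (core_nonempty (dual_game (EPCG directed src dst s t R)) <->
     is_edge directed src dst s t)) /\
  (* (iv) *)
  (simple_game (VPCG directed src dst s t R) ->
    (core_nonempty (dual_game (VPCG directed src dst s t R)) <->
     exists x : inner_vertex s t,
       is_edge directed src dst s (val x) && is_edge directed src dst (val x) t)).
Proof.
split; [|split; [|split]] => sv.
- rewrite simple_core_nonemptyP //.
  by split=> -[e /EPCG_veto_player he]; exists e.
- rewrite simple_core_nonemptyP //.
  by split=> -[x /VPCG_veto_player hx]; exists x.
- rewrite simple_core_nonemptyP; last exact: dual_simple_game.
  exact: EPCG_dual_veto_exists.
- rewrite simple_core_nonemptyP; last exact: dual_simple_game.
  by split=> -[x /(VPCG_dual_veto_player _ sv) hx]; exists x.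
Qed.
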